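(* Let $T$ be a $C_{p^rq^s}$-transfer system with exactly two connected components. If the connected component of $(0,0)$ equals $L_{(\ell,k)}$ for some $\ell<r$ and $k<s$, then $T$ is not lesser simply paired.
   Context: $p,q$ are distinct primes and $r,s\ge 0$ integers. The subgroups of $C_{p^rq^s}$ are identified with grid points $(i,j)$, $0\le i\le r$, $0\le j\le s$, where $(i,j)$ stands for $C_{p^iq^j}$ (intersection is coordinatewise minimum). A $C_{p^rq^s}$-transfer system is a partial order $\to$ on these vertices such that: $(i_1,j_1)\to(i_2,j_2)$ implies $i_1\le i_2$, $j_1\le j_2$; it is reflexive and transitive; and $(i_1,j_1)\to(i_2,j_2)$ implies $(\min\{i_1,a\},\min\{j_1,b\})\to(\min\{i_2,a\},\min\{j_2,b\})$ for every vertex $(a,b)$. Connected components are those of the underlying undirected graph. $L_{(\ell,k)}=\{(i,j): 0\le i\le\ell,\ 0\le j\le s\}\cup\{(i,j): 0\le i\le r,\ 0\le j\le k\}$. A transfer system is saturated if whenever $L\le K\le H$ and $L\to H$ is in it then $K\to H$ is in it; $\mathrm{Hull}(T)$ is the smallest saturated transfer system containing $T$; $T_c$ is the complete transfer system. A pair $(T,T')$ is compatible if $T\subseteq T'$ and for all subgroups $A,B,C$ with $B,C\le A$: if $B\to A$ is in $T$ and $B\cap C\to B$ is in $T'$ then $C\to A$ is in $T'$. $T$ is lesser simply paired if for every transfer system $T'\supseteq T$, $(T,T')$ is compatible iff $T'\in\{\mathrm{Hull}(T),T_c\}$. *)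

From mathcomp Require Import all_boot.
Set Implicit Arguments. Unset Strict Implicit. Unset Printing Implicit Defensive.

(* Vertices (i,j), 0 <= i <= r, 0 <= j <= s; (i,j) stands for C_{p^i q^j}. *)
Definition vert (r s : nat) : finType := ('I_r.+1 * 'I_s.+1)%type.

(* subgroup inclusion: coordinatewise order *)
Definition vle (r s : nat) (x y : vert r s) : bool :=
  (x.1 <= y.1)%N && (x.2 <= y.2)%N.

(* intersection: coordinatewise minimum *)
Definition vmeet (r s : nat) (x y : vert r s) : vert r s :=
  (inord (minn x.1 y.1), inord (minn x.2 y.2)).

Definition is_transfer (r s : nat) (T : rel (vert r s)) : Prop :=
  [/\ (forall x y, T x y -> vle x y),
      (forall x, T x x),
      (forall x y z, T x y -> T y z -> T x z) &
      (forall x y a, T x y -> T (vmeet x a) (vmeet y a))].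

Definition saturated (r s : nat) (T : rel (vert r s)) : Prop :=
  forall L K H, vle L K -> vle K H -> T L H -> T K H.

Definition complete_ts (r s : nat) : rel (vert r s) := fun x y => vle x y.

Definition subts (r s : nat) (T T' : rel (vert r s)) : Prop :=
  forall x y, T x y -> T' x y.

Definition eqts (r s : nat) (T T' : rel (vert r s)) : Prop :=
  forall x y, T x y = T' x y.

Definition is_hull (r s : nat) (T H : rel (vert r s)) : Prop :=
  [/\ is_transfer H, saturated H, subts T H &
      forall S, is_transfer S -> saturated S -> subts T S -> subts H S].

Definition compatible (r s : nat) (T T' : rel (vert r s)) : Prop :=
  subts T T' /\
  forall A B C : vert r s, vle B A -> vle C A ->
    T B A -> T' (vmeet B C) B -> T' C A.

Definition lesser_simply_paired (r s : nat) (T : rel (vert r s)) : Prop :=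
  forall T', is_transfer T' -> subts T T' ->
    (compatible T T' <-> (is_hull T T' \/ eqts T' (@complete_ts r s))).

Definition undirected (r s : nat) (T : rel (vert r s)) : rel (vert r s) :=
  fun x y => T x y || T y x.

Definition origin (r s : nat) : vert r s := (ord0, ord0).

Definition inL (r s l k : nat) (v : vert r s) : bool :=
  (v.1 <= l)%N || (v.2 <= k)%N.

From mathcomp Require Import all_boot.
From mathcomp Require Import zify.
Set Implicit Arguments. Unset Strict Implicit.

(* T only relates vertices on the same side of L = L_(l,k), so it is contained
   in the saturated transfer system [sameL l k] of all inclusions that do not
   cross the boundary of L; hence Hull(T) is contained in it too.  Adding to
   [sameL l k] all transfers out of the origin gives a transfer system [sameL0 l k]
   compatible with T.  It is not Hull(T), because it contains
   (0,0) -> (r,s) and (r,s) lies outside L; it is not complete, because it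
   misses (0,s) -> (r,s), which crosses the boundary without starting at (0,0). *)

Lemma vmeet1 r s (x a : vert r s) : ((vmeet x a).1 : nat) = minn x.1 a.1.
Proof. by rewrite /vmeet /= inordK // (leq_ltn_trans (geq_minl _ _)). Qed.

Lemma vmeet2 r s (x a : vert r s) : ((vmeet x a).2 : nat) = minn x.2 a.2.
Proof. by rewrite /vmeet /= inordK // (leq_ltn_trans (geq_minl _ _)). Qed.

Lemma eq_origin r s (x : vert r s) :
  (x == origin r s) = ((x.1 : nat) == 0) && ((x.2 : nat) == 0).
Proof. by case: x => a b; rewrite /origin xpair_eqE. Qed.

Lemma vle_refl r s (x : vert r s) : vle x x.
Proof. by rewrite /vle !leqnn. Qed.

Lemma vle_trans r s (x y z : vert r s) : vle x y -> vle y z -> vle x z.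
Proof. rewrite /vle => /andP [? ?] /andP [? ?]; apply/andP; lia. Qed.

Lemma vle_vmeet2 r s (x y a : vert r s) : vle x y -> vle (vmeet x a) (vmeet y a).
Proof. rewrite /vle !vmeet1 !vmeet2 => /andP [? ?]; apply/andP; lia. Qed.

Lemma vle_vmeetr r s (x a : vert r s) : vle (vmeet x a) a.
Proof. by rewrite /vle vmeet1 vmeet2 !geq_minr. Qed.

Lemma inL_vle r s l k (x y : vert r s) : vle x y -> inL l k y -> inL l k x.
Proof. rewrite /vle /inL => /andP [? ?] /orP [] ?; apply/orP; lia. Qed.

Lemma inL_vmeet r s l k (x y a : vert r s) : vle x y -> inL l k x = inL l k y ->
  inL l k (vmeet x a) = inL l k (vmeet y a).
Proof.
rewrite /vle /inL !vmeet1 !vmeet2 !geq_min => /andP [? ?].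
by case: (leqP x.1 l); case: (leqP x.2 k); case: (leqP y.1 l);
   case: (leqP y.2 k); case: (leqP a.1 l); case: (leqP a.2 k) => * //=; lia.
Qed.

Lemma inL_top r s l k : l < r -> k < s -> inL l k ((ord_max, ord_max) : vert r s) = false.
Proof. by rewrite /inL /= => lr ks; apply/negbTE; rewrite negb_or -!ltnNge lr ks. Qed.

Definition sameL r s l k : rel (vert r s) :=
  fun x y => vle x y && (inL l k x == inL l k y).

Definition sameL0 r s l k : rel (vert r s) :=
  fun x y => vle x y && ((inL l k x == inL l k y) || (x == origin r s)).

Lemma sameL_transfer r s l k : is_transfer (@sameL r s l k).
Proof.
split=> [x y /andP [] //|x|x y z|x y a].
- by rewrite /sameL vle_refl eqxx.
- case/andP=> xy /eqP exy /andP [yz /eqP eyz].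
  by rewrite /sameL (vle_trans xy yz) exy eyz eqxx.
- by case/andP=> xy /eqP exy; rewrite /sameL vle_vmeet2 // (inL_vmeet a xy exy) eqxx.
Qed.

Lemma sameL_saturated r s l k : saturated (@sameL r s l k).
Proof.
move=> L K H LK KH /andP [_ /eqP eLH]; rewrite /sameL KH /=.
case hH: (inL l k H); first by rewrite (inL_vle KH hH).
by case hK: (inL l k K) => //; move: eLH; rewrite hH (inL_vle LK hK).
Qed.

Lemma sameL0_transfer r s l k : is_transfer (@sameL0 r s l k).
Proof.
split=> [x y /andP [] //|x|x y z|x y a].
- by rewrite /sameL0 vle_refl eqxx.
- case/andP=> xy exy /andP [yz eyz]; rewrite /sameL0 (vle_trans xy yz) /=.
  case/orP: exy => [/eqP exy|->]; last by rewrite orbT.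
  case/orP: eyz => [/eqP eyz|y0]; first by rewrite exy eyz eqxx.
  (* x lies below the origin y, hence is the origin *)
  move: xy y0; rewrite /vle !eq_origin => /andP [? ?] /andP [/eqP ? /eqP ?].
  by apply/orP; right; apply/andP; lia.
- case/andP=> xy exy; rewrite /sameL0 vle_vmeet2 //=.
  case/orP: exy => [/eqP exy|]; first by rewrite (inL_vmeet a xy exy) eqxx.
  rewrite !eq_origin !vmeet1 !vmeet2 => /andP [/eqP -> /eqP ->].
  by rewrite !min0n orbT.
Qed.

Lemma sameL_sub_sameL0 r s l k : subts (@sameL r s l k) (sameL0 l k).
Proof. by move=> x y /andP [xy exy]; rewrite /sameL0 xy exy. Qed.

Lemma connect_undirected_edge r s (e : rel (vert r s)) (o x y : vert r s) :
  e x y -> connect (undirected e) o x = connect (undirected e) o y.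
Proof.
move=> exy; have sym : connect_sym (undirected e).
  by apply: sym_connect_sym => u v; rewrite /undirected orbC.
have cxy : connect (undirected e) x y by apply: connect1; rewrite /undirected exy.
apply/idP/idP => [/connect_trans|]; first exact.
by move/connect_trans; apply; rewrite sym.
Qed.

Lemma sameL0_compatible r s l k (T : rel (vert r s)) :
  subts T (sameL l k) -> compatible T (sameL0 l k).
Proof.
move=> TL; split=> [x y /TL /sameL_sub_sameL0 //|A B C BA CA].
move=> /TL /andP [_ /eqP eBA] /andP [BCB eBCB]; rewrite /sameL0 CA /=.
case hA: (inL l k A); first by rewrite (inL_vle CA hA).
case/orP: eBCB => [/eqP eBCB|].
  case hC: (inL l k C) => //.
  by move: (inL_vle (vle_vmeetr B C) hC); rewrite eBCB eBA hA.
(* B meets C in the origin while B lies outside L, so C lies on the axes *)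
move: hA; rewrite -eBA !eq_origin vmeet1 vmeet2 /inL => /negbT.
rewrite negb_or -!ltnNge => /andP [? ?] /andP [/eqP ? /eqP ?].
by apply/orP; right; apply/andP; lia.
Qed.

Lemma sameL0_not_hull r s l k (T : rel (vert r s)) :
  l < r -> k < s -> subts T (sameL l k) -> ~ is_hull T (sameL0 l k).
Proof.
move=> lr ks TL [_ _ _ /(_ _ (@sameL_transfer r s l k) (@sameL_saturated r s l k) TL) sub].
have top0 : sameL0 l k (origin r s) (ord_max, ord_max).
  by rewrite /sameL0 /vle /= eqxx !orbT.
by move: (sub _ _ top0); rewrite /sameL /= inL_top // /inL /= leq0n.
Qed.

Lemma sameL0_not_complete r s l k :
  l < r -> k < s -> ~ eqts (@sameL0 r s l k) (@complete_ts r s).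
Proof.
move=> lr ks full; have s_gt1 : 1 < s.+1 by rewrite ltnS (leq_ltn_trans _ ks).
move: (full (ord0, Ordinal s_gt1) (ord_max, ord_max)).
rewrite /sameL0 /complete_ts /vle /= inL_top // /inL /= eq_origin /=.
by rewrite andbF (leq_ltn_trans (leq0n k) ks).
Qed.

Theorem mainTheorem15 (p q r s : nat) (T : rel (vert r s)) (l k : nat) :
  prime p -> prime q -> p != q ->
  is_transfer T ->
  n_comp (undirected T) predT = 2 ->
  (l < r)%N -> (k < s)%N ->
  (forall v, connect (undirected T) (origin r s) v = inL l k v) ->
  ~ lesser_simply_paired T.
Proof.
(* The component of the origin already determines the argument. *)
move=> _ _ _ [Tle _ _ _] _ lr ks compL LSP.
have TL : subts T (sameL l k).
  move=> x y Txy; rewrite /sameL Tle //= -!compL.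
  by rewrite (connect_undirected_edge _ Txy) eqxx.
have TL0 : subts T (sameL0 l k) by move=> x y /TL /sameL_sub_sameL0.
have [hull|full] := (LSP _ (@sameL0_transfer r s l k) TL0).1 (sameL0_compatible TL).
- exact: sameL0_not_hull lr ks TL hull.
- exact: sameL0_not_complete lr ks full.
Qed.
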